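(* Let $A$ be a nice $\mathcal{E}(2)$-algebra over $\mathbb{F}_2$ (see context). If $a\in A^d$ and $b\in A^d$ are two elements of the same degree $d$, then $$a\cup_d b=b\cup_d a.$$
   Context: All vector spaces are over $\mathbb{F}_2$. Let $\mathcal{E}(2)$ be the cochain complex (negatively graded) with $\mathcal{E}(2)_i=\mathbb{F}_2\langle e_i,\tau_i\rangle$ for $i\ge 0$, differential $d e_i=d\tau_i=e_{i-1}+\tau_{i-1}$ ($d e_0=d\tau_0=0$), with $\Sigma_2$ acting by $\tau.e_k=\tau_k$, $\tau.\tau_k=e_k$. An $\mathcal{E}(2)$-algebra structure on a cochain complex $A^*$ is a cochain map $\psi:\mathcal{E}(2)\otimes A^{\otimes 2}\to A$ that is $\Sigma_2$-equivariant (with $\Sigma_2$ acting on $\mathrm{Hom}(A^{\otimes 2},A)$ by $(\tau.f)(v_1\otimes v_2)=f(v_2\otimes v_1)$). Writing $x_1\cup_i x_2=\psi(e_i\otimes x_1\otimes x_2)$, this is equivalent to giving linear maps $\cup_i:A^r\otimes A^s\to A^{r+s-i}$ ($i\ge0$) with $\psi(\tau_i\otimes x_1\otimes x_2)=x_2\cup_i x_1$ and the Leibniz rule $\delta(x_1\cup_i x_2)=x_1\cup_{i-1}x_2+x_2\cup_{i-1}x_1+\delta x_1\cup_i x_2+x_1\cup_i\delta x_2$ (with $\cup_{-1}=0$). The $\mathcal{E}(2)$-algebra $A$ is nice if for all homogeneous $x,x'\in A$ of degrees $|x|,|x'|$: (i) $x\cup_{|x|}x=x$; (ii) $x\cup_i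 x'=0$ whenever $i>\min(|x|,|x'|)$. *)

From HB Require Import structures.
From mathcomp Require Import all_boot all_order all_algebra.
Set Implicit Arguments. Unset Strict Implicit. Unset Printing Implicit Defensive.
Import Order.TTheory GRing.Theory Num.Theory.
Local Open Scope ring_scope.

(* A graded F_2-vector space: A r is the degree-r piece A^r (r : int). *)
Definition castA (A : int -> lmodType 'F_2) (r s : int) (e : r = s) (x : A r) : A s :=
  eq_rect r (fun t => A t) x s e.

Lemma deg_leib1 (r s : int) (i : nat) : r + s - i%:Z = r + s - (i.+1)%:Z + 1.
Proof. by rewrite -addn1 PoszD opprD addrA addrNK. Qed.
Lemma deg_leib2 (r s : int) (i : nat) : s + r - i%:Z = r + s - (i.+1)%:Z + 1.
Proof. by rewrite [s + r]addrC; apply: deg_leib1. Qed.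
Lemma deg_leib3 (r s : int) (i : nat) : r + 1 + s - i%:Z = r + s - i%:Z + 1.
Proof. by rewrite (addrAC r 1 s) (addrAC (r + s) 1). Qed.
Lemma deg_leib4 (r s : int) (i : nat) : r + (s + 1) - i%:Z = r + s - i%:Z + 1.
Proof. by rewrite addrA (addrAC (r + s) 1). Qed.
Lemma deg_nice (n : nat) : n%:Z + n%:Z - n%:Z = n%:Z.
Proof. by rewrite addrK. Qed.

(* An E(2)-algebra structure on the cochain complex (A^*, delta):
   cup i : A^r (x) A^s -> A^(r+s-i), bilinear, satisfying the Leibniz rule
   delta(x1 cup_i x2) = x1 cup_{i-1} x2 + x2 cup_{i-1} x1
                        + delta x1 cup_i x2 + x1 cup_i delta x2, with cup_{-1} = 0. *)
Record E2Algebra := {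
  E2A : int -> lmodType 'F_2;
  delta : forall r : int, E2A r -> E2A (r + 1);
  delta_lin : forall r (a : 'F_2) (x y : E2A r),
      delta (a *: x + y) = a *: delta x + delta y;
  delta_delta : forall r (x : E2A r), delta (delta x) = 0;
  cup : forall (i : nat) (r s : int), E2A r -> E2A s -> E2A (r + s - i%:Z);
  cup_linl : forall i r s (a : 'F_2) (x x' : E2A r) (y : E2A s),
      cup i (a *: x + x') y = a *: cup i x y + cup i x' y;
  cup_linr : forall i r s (a : 'F_2) (x : E2A r) (y y' : E2A s),
      cup i x (a *: y + y') = a *: cup i x y + cup i x y';
  leibniz0 : forall r s (x : E2A r) (y : E2A s),
      delta (cup 0 x y) =
        castA (deg_leib3 r s 0) (cup 0 (delta x) y)
      + castA (deg_leib4 r s 0) (cup 0 x (delta y));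
  leibnizS : forall (i : nat) r s (x : E2A r) (y : E2A s),
      delta (cup i.+1 x y) =
        castA (deg_leib1 r s i) (cup i x y)
      + castA (deg_leib2 r s i) (cup i y x)
      + castA (deg_leib3 r s i.+1) (cup i.+1 (delta x) y)
      + castA (deg_leib4 r s i.+1) (cup i.+1 x (delta y))
}.

Definition nice (A : E2Algebra) : Prop :=
  (forall (n : nat) (x : E2A A n%:Z), @castA (E2A A) _ _ (deg_nice n) (cup n x x) = x) /\
  (forall (i : nat) (r s : int) (x : E2A A r) (x' : E2A A s),
      Num.min r s < i%:Z -> cup i x x' = 0).

From HB Require Import structures.
From mathcomp Require Import all_boot all_order all_algebra.
Import Order.TTheory GRing.Theory Num.Theory.
Local Open Scope ring_scope.

(* Over F_2 it suffices to show a cup_d b + b cup_d a = 0.  Niceness (i) says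
   that x |-> x cup_d x is the identity on A^d (up to the degree cast
   d + d - d = d).  Apply it to a, b and a + b and expand the square
   (a + b) cup_d (a + b) by bilinearity: the diagonal terms give back a + b,
   so the cross terms a cup_d b + b cup_d a must vanish. *)

Lemma addvv_F2 (V : lmodType 'F_2) (x : V) : x + x = 0.
Proof.
have two0 : (1 + 1 : 'F_2) = 0 by apply/val_inj.
by rewrite -[x in x + _]scale1r -[x in _ + x]scale1r -scalerDl two0 scale0r.
Qed.

Lemma castAD (A : int -> lmodType 'F_2) r s (e : r = s) (x y : A r) :
  castA e (x + y) = castA e x + castA e y.
Proof. by case: s / e. Qed.

Lemma castA_eq0 (A : int -> lmodType 'F_2) r s (e : r = s) (x : A r) :
  castA e x = 0 -> x = 0.
Proof. by case: s / e. Qed.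

Section CupAlgebra.
Variable A : E2Algebra.

Lemma cupDl i r s (x x' : E2A A r) (y : E2A A s) :
  cup i (x + x') y = cup i x y + cup i x' y.
Proof. by have := cup_linl i 1 x x' y; rewrite !scale1r. Qed.

Lemma cupDr i r s (x : E2A A r) (y y' : E2A A s) :
  cup i x (y + y') = cup i x y + cup i x y'.
Proof. by have := cup_linr i 1 x y y'; rewrite !scale1r. Qed.

Lemma cup_sqrD i r (x y : E2A A r) :
  cup i (x + y) (x + y) = cup i x x + cup i y y + (cup i x y + cup i y x).
Proof. by rewrite cupDl !cupDr [cup i y x + _]addrC addrACA. Qed.

Lemma cup_top_cross0 (hA : nice A) (d : nat) (a b : E2A A d%:Z) :
  cup d a b + cup d b a = 0.
Proof.
case: hA => cup_diag _.
have := cup_diag d (a + b).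
rewrite cup_sqrD 2!castAD !cup_diag -[RHS]addr0 => /addrI.
exact: castA_eq0.
Qed.

End CupAlgebra.

Theorem lemma2p4 (A : E2Algebra) (hA : nice A) (d : nat) (a b : E2A A d%:Z) :
  cup d a b = cup d b a.
Proof.
apply: (addIr (cup d b a)).
by rewrite cup_top_cross0 // addvv_F2.
Qed.
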